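(* Let $n=2k+1$ with $k\ge 1$. If $S$ is a strong resolving set of $U_n$, then $|S|\ge 2n$.
   Context: For $n\ge 3$, $U_n$ is the graph with vertex set $\{a_i,b_i,c_i,d_i,e_i : 1\le i\le n\}$ and edge set $\{a_ia_{i+1}, b_ib_{i+1}, e_ie_{i+1}, a_ib_i, b_ic_i, c_id_i, d_ie_i, c_{i+1}d_i : 1\le i\le n\}$, indices taken modulo $n$. $d$ is the graph distance. A vertex $w$ strongly resolves distinct vertices $u,v$ if $d(v,w)=d(v,u)+d(u,w)$ or $d(u,w)=d(u,v)+d(v,w)$. A set $S$ is a strong resolving set if every two distinct vertices are strongly resolved by some vertex of $S$. *)

From mathcomp Require Import all_boot.
Set Implicit Arguments. Unset Strict Implicit. Unset Printing Implicit Defensive.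

(* Vertices of U_n: pairs (l, i) with l : 'I_5 encoding the letter
   (0 = a, 1 = b, 2 = c, 3 = d, 4 = e) and i : 'I_n the index
   (indices 1..n of the paper are 0..n-1 here, taken modulo n). *)
Definition V (n : nat) : finType := ('I_5 * 'I_n)%type.

Definition succ_mod (n : nat) (i j : 'I_n) : bool := val j == (val i).+1 %% n.

Definition Uedge0 (n : nat) (u v : V n) : bool :=
  let: (l, i) := u in let: (l', j) := v in
  [|| [&& val l == 0, val l' == 0 & succ_mod i j]
    , [&& val l == 1, val l' == 1 & succ_mod i j]
    , [&& val l == 4, val l' == 4 & succ_mod i j]
    , [&& val l == 0, val l' == 1 & i == j]
    , [&& val l == 1, val l' == 2 & i == j]
    , [&& val l == 2, val l' == 3 & i == j]
    , [&& val l == 3, val l' == 4 & i == j]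
    | [&& val l == 2, val l' == 3 & succ_mod j i]].    (* c_{i+1} d_i *)

Definition Uadj (n : nat) : rel (V n) := fun u v => Uedge0 u v || Uedge0 v u.

Fixpoint ball (n : nat) (k : nat) (u : V n) : {set V n} :=
  match k with
  | 0 => [set u]
  | k'.+1 => ball k' u :|: [set y | [exists x in ball k' u, Uadj x y]]
  end.

(* Graph distance: least k such that v lies within k steps of u
   (U_n is connected, so this is attained below #|V n|). *)
Definition dist (n : nat) (u v : V n) : nat :=
  find (fun k => v \in ball k u) (iota 0 #|V n|).

Definition strongly_resolves (n : nat) (w u v : V n) : Prop :=
  dist v w = dist v u + dist u w \/ dist u w = dist u v + dist v w.

Definition strong_resolving_set (n : nat) (S : {set V n}) : Prop :=
  forall u v : V n, u <> v -> exists2 w, w \in S & strongly_resolves w u v.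

(* Call u and v mutually maximally distant when no neighbour of u is farther
   from v than u, and no neighbour of v is farther from u than v.  Only u and v
   themselves can strongly resolve such a pair: if w <> u lay on a geodesic
   v--u--w, the first step from u towards w would lead away from v.

   In U_(2k+1) the 2n pairwise disjoint pairs (a_i, e_(i+k)) and (c_i, d_(i+k))
   are mutually maximally distant.  Their distances are bounded below by
   potentials that grow by at most one along each edge, and the distances from
   their neighbours are bounded above by walks along a spoke a_j..e_j, around
   one of the cycles a, b, e, and back along a spoke.  A strong resolving set
   meets each of the 2n pairs, hence has at least 2n elements. *)

From mathcomp Require Import all_boot zify.
Set Implicit Arguments. Unset Strict Implicit. Unset Printing Implicit Defensive.

Section GraphDistance.
Variable n : nat.
Implicit Types (u v w x y z : V n) (m : nat).

Lemma Uadj_sym x y : Uadj x y = Uadj y x.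
Proof. by rewrite /Uadj orbC. Qed.

Lemma in_ball0 u y : (y \in ball 0 u) = (y == u).
Proof. exact: in_set1. Qed.

Lemma in_ballS m u y :
  (y \in ball m.+1 u) = (y \in ball m u) || [exists x in ball m u, Uadj x y].
Proof. by rewrite /= in_setU in_set. Qed.

Lemma ball_subS m u y : y \in ball m u -> y \in ball m.+1 u.
Proof. by rewrite in_ballS => ->. Qed.

Lemma ball_adj m u x y : x \in ball m u -> Uadj x y -> y \in ball m.+1 u.
Proof.
by move=> xu xy; rewrite in_ballS; apply/orP; right; apply/existsP; exists x; rewrite xu.
Qed.

Lemma ballS_first m u y : y \in ball m.+1 u ->
  y \in ball m u \/ exists2 x, Uadj u x & y \in ball m x.
Proof.
elim: m y => [|m IH] y.
  rewrite in_ballS in_ball0 => /orP [->|/existsP [x /andP []]]; first by left.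
  by rewrite in_ball0 => /eqP-> uy; right; exists y; rewrite ?in_ball0.
rewrite in_ballS => /orP [/IH [yu|[x ux yx]]|/existsP [z /andP [/IH zu zy]]].
- by left; apply: ball_subS.
- by right; exists x; rewrite ?ball_subS.
- case: zu => [zu|[x ux zx]]; first by left; apply: ball_adj zy.
  by right; exists x; last exact: ball_adj zy.
Qed.

Lemma ball_sym m u y : y \in ball m u -> u \in ball m y.
Proof.
elim: m u y => [|m IH] u y; first by rewrite !in_ball0 eq_sym.
case/ballS_first => [/IH/ball_subS //|[x ux /IH xy]].
by apply: ball_adj xy _; rewrite Uadj_sym.
Qed.

Lemma ball_trans a b u y z : y \in ball a u -> z \in ball b y -> z \in ball (a + b) u.
Proof.
move=> yu; elim: b z => [|b IH] z; first by rewrite in_ball0 addn0 => /eqP ->.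
rewrite in_ballS addnS => /orP [/IH/ball_subS //|/existsP [x /andP [/IH xu xz]]].
exact: ball_adj xu xz.
Qed.

Local Notation N := #|V n|.

(* [dist] falls back to [N] when [v] is not reached in fewer than [N] steps. *)
Lemma dist_le_card u v : dist u v <= N.
Proof. by rewrite /dist -[leqRHS](size_iota 0) find_size. Qed.

Lemma ball_dist u v : dist u v < N -> v \in ball (dist u v) u.
Proof.
move=> lt_dN; have := nth_find 0 (a := fun m => v \in ball m u) (s := iota 0 N).
by rewrite has_find size_iota nth_iota // add0n => ->.
Qed.

Lemma dist_le_ball m u v : v \in ball m u -> dist u v <= m.
Proof.
move=> vu; case: (leqP N m) => [/(leq_trans (dist_le_card u v)) //|ltmN].
rewrite leqNgt; apply/negP => /(before_find 0 (a := fun m => v \in ball m u)).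
by rewrite nth_iota // add0n vu.
Qed.

Lemma distC u v : dist u v = dist v u.
Proof.
suff le_dist x y : dist x y <= dist y x by apply/eqP; rewrite eqn_leq !le_dist.
case: (ltnP (dist y x) N) => [/ball_dist/ball_sym/dist_le_ball //|].
exact: leq_trans (dist_le_card x y).
Qed.

Lemma dist_triangle u v w : dist u w <= dist u v + dist v w.
Proof.
case: (ltnP (dist u v) N) => [uv|]; last first.
  by move=> le_N_uv; apply: leq_trans (dist_le_card u w) (leq_trans le_N_uv (leq_addr _ _)).
case: (ltnP (dist v w) N) => [vw|]; last first.
  by move=> le_N_vw; apply: leq_trans (dist_le_card u w) (leq_trans le_N_vw (leq_addl _ _)).
exact/dist_le_ball/(ball_trans (ball_dist uv) (ball_dist vw)).
Qed.

Lemma dist_adj u v : Uadj u v -> dist u v <= 1.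
Proof. by move=> uv; apply/dist_le_ball/(ball_adj _ uv); rewrite in_ball0. Qed.

Lemma dist_eq0 u v : dist u v = 0 -> u = v.
Proof.
move=> d0; have /ball_dist : dist u v < N by rewrite d0; apply/card_gt0P; exists u.
by rewrite d0 in_ball0 => /eqP.
Qed.

Lemma lipschitz_le_dist (f : V n -> nat) u v :
  f u = 0 -> (forall x y, Uadj x y -> f y <= f x + 1) -> (forall y, f y <= N) ->
  f v <= dist u v.
Proof.
move=> fu0 f_lip f_le.
have f_ball m y : y \in ball m u -> f y <= m.
  elim: m y => [|m IH] y; first by rewrite in_ball0 => /eqP ->; rewrite fu0.
  rewrite in_ballS => /orP [/IH/leq_trans -> //|/existsP [x /andP [/IH xu xy]]].
  by apply: leq_trans (f_lip _ _ xy) _; rewrite addn1.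
case: (ltnP (dist u v) N) => [/ball_dist/f_ball //|]; exact: leq_trans (f_le v).
Qed.

Definition maximally_distant u v := forall x, Uadj v x -> dist u x <= dist u v.

Lemma maximally_distant_geodesic u v w : u <> v -> maximally_distant v u ->
  dist v w = dist v u + dist u w -> w = u.
Proof.
move=> neq_uv far_u vw.
case: (ltnP (dist u w) N) => [uw|]; last first.
  move=> le_N_uw; have := dist_le_card v w; rewrite vw.
  have /eqP -> : dist u w == N by rewrite eqn_leq dist_le_card.
  by rewrite -[leqRHS]add0n leq_add2r leqn0 distC => /eqP/dist_eq0/neq_uv.
have := ball_dist uw; case E : (dist u w) => [|m]; first by move: E => /dist_eq0.
move=> /ballS_first [/dist_le_ball|[x ux /dist_le_ball xw]].
  by rewrite E ltnn.
have := dist_triangle v x w; have := far_u x ux; lia.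
Qed.

Lemma strongly_resolves_mutually_maximally_distant u v w : u <> v ->
  maximally_distant v u -> maximally_distant u v ->
  strongly_resolves w u v -> w = u \/ w = v.
Proof.
move=> neq_uv far_u far_v [vw|uw]; first by left; apply: maximally_distant_geodesic vw.
by right; apply: maximally_distant_geodesic uw => // /esym.
Qed.

End GraphDistance.

Section Coordinates.
Variable n : nat.
Hypothesis n_gt0 : 0 < n.

Definition idx (j : nat) : 'I_n := Ordinal (ltn_pmod j n_gt0).
Definition vtx (l j : nat) : V n := (inord l, idx j).
Definition offset (i j : 'I_n) : nat := (j + (n - i)) %% n.

Lemma vtx_letter l j : l < 5 -> val (vtx l j).1 = l.
Proof. exact: inordK. Qed.

Lemma vtx_index l j : (vtx l j).2 = idx j.
Proof. by []. Qed.

Lemma vtxDn l j : vtx l (j + n) = vtx l j.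
Proof. by congr pair; apply: val_inj; rewrite /= modnDr. Qed.

Lemma offset_lt i j : offset i j < n.
Proof. exact/ltn_pmod/n_gt0. Qed.

Lemma modnD_subn_modn j t : (j + t + (n - j %% n)) %% n = t %% n.
Proof.
rewrite {1}(divn_eq j n).
have : j %% n < n by apply/ltn_pmod/n_gt0.
move: (j %% n) (j %/ n) => r q lt_rn.
have -> : q * n + r + t + (n - r) = q.+1 * n + t by rewrite mulSn; lia.
exact: modnMDl.
Qed.

Lemma offset_self i : offset i i = 0.
Proof. by rewrite /offset subnKC ?modnn // ltnW. Qed.

Lemma offset_idx j t : offset (idx j) (idx (j + t)) = t %% n.
Proof. by rewrite /offset /= modnDml modnD_subn_modn. Qed.

Lemma vtx_offset j (x : V n) : x = vtx (val x.1) (j + offset (idx j) x.2).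
Proof.
case: x => l i; rewrite /vtx inord_val; congr pair; apply: val_inj.
by rewrite /= /offset modnDmr addnA modnD_subn_modn modn_small.
Qed.

Definition cyc_succ (r r' : nat) : Prop :=
  r' = r + 1 /\ r + 1 < n \/ r = n - 1 /\ r' = 0.

Lemma cyc_succ_modn j : cyc_succ (j %% n) (j.+1 %% n).
Proof.
have lt_jn : j %% n < n by apply/ltn_pmod/n_gt0.
rewrite -[j.+1]addn1 -modnDml /cyc_succ.
case: (ltngtP (j %% n + 1) n) => [lt_n|gt_n|eq_n]; first by left; rewrite modn_small.
  by lia.
by right; rewrite eq_n modnn; lia.
Qed.

Lemma offset_succ i j j' : succ_mod j j' -> cyc_succ (offset i j) (offset i j').
Proof. by rewrite /succ_mod /offset => /eqP ->; rewrite modnDml addSn; apply: cyc_succ_modn. Qed.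

(* Edges of [U_n] seen in coordinates (letter, offset from a base index). *)
Definition coord_adj (l l' r r' : nat) : Prop :=
  (l = 0 /\ l' = 0 \/ l = 1 /\ l' = 1 \/ l = 4 /\ l' = 4) /\ (cyc_succ r r' \/ cyc_succ r' r) \/
  (l = 0 /\ l' = 1 \/ l = 1 /\ l' = 0 \/ l = 1 /\ l' = 2 \/ l = 2 /\ l' = 1 \/
   l = 2 /\ l' = 3 \/ l = 3 /\ l' = 2 \/ l = 3 /\ l' = 4 \/ l = 4 /\ l' = 3) /\ r = r' \/
  l = 2 /\ l' = 3 /\ cyc_succ r' r \/ l = 3 /\ l' = 2 /\ cyc_succ r r'.

Lemma Uadj_coord i (x y : V n) :
  Uadj x y -> coord_adj (val x.1) (val y.1) (offset i x.2) (offset i y.2).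
Proof.
case: x y => l j [l' j']; rewrite /Uadj /Uedge0 /= => xy.
by repeat case/orP: xy => xy;
  case/and3P: xy => /eqP-> /eqP-> xy; rewrite /coord_adj;
  first [move/eqP: xy => -> | have := offset_succ i xy]; tauto.
Qed.

Definition cdist r := minn r (n - r).
(* Cyclic distance from 0 to the pair {r, r+1}: [d_r] hangs from [c_r] and [c_(r+1)]. *)
Definition cdist' r := minn r (n.-1 - r).

(* Lower bounds for the distance from [a_0] and from [c_0] to the vertex with
   a given letter and offset; each grows by at most 1 along an edge. *)
Definition pot_a l r :=
  match l with
  | 0 => cdist r | 1 => cdist r + 1 | 2 => cdist r + 2
  | 3 => cdist' r + 3 | _ => cdist' r + 4
  end.
Definition pot_c l r :=
  match l with
  | 0 => cdist r + 2 | 1 => cdist r + 1 | 2 => minn (2 * cdist r) (cdist r + 2)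
  | 3 => minn (2 * cdist' r + 1) (cdist' r + 3) | _ => cdist' r + 2
  end.

Lemma pot_a_lipschitz l l' r r' :
  r < n -> r' < n -> coord_adj l l' r r' -> pot_a l' r' <= pot_a l r + 1.
Proof.
rewrite /coord_adj /cyc_succ => lt_rn lt_r'n adj.
by decompose [and or] adj; subst; rewrite /pot_a /cdist /cdist'; lia.
Qed.

Lemma pot_c_lipschitz l l' r r' :
  r < n -> r' < n -> coord_adj l l' r r' -> pot_c l' r' <= pot_c l r + 1.
Proof.
rewrite /coord_adj /cyc_succ => lt_rn lt_r'n adj.
by decompose [and or] adj; subst; rewrite /pot_c /cdist /cdist'; lia.
Qed.

Lemma pot_a_base : pot_a 0 0 = 0.
Proof. exact: min0n. Qed.

Lemma pot_c_base : pot_c 2 0 = 0.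
Proof. by rewrite /pot_c /cdist min0n. Qed.

Lemma pot_a_le l r : pot_a l r <= 5 * n.
Proof. by case: l => [|[|[|[|l]]]]; rewrite /pot_a /cdist /cdist'; lia. Qed.

Lemma pot_c_le l r : pot_c l r <= 5 * n.
Proof. by case: l => [|[|[|[|l]]]]; rewrite /pot_c /cdist /cdist'; lia. Qed.

Lemma potential_le_dist (h : nat -> nat -> nat) l0 l j t :
  l0 < 5 -> l < 5 -> h l0 0 = 0 ->
  (forall l l' r r', r < n -> r' < n -> coord_adj l l' r r' -> h l' r' <= h l r + 1) ->
  (forall l r, h l r <= 5 * n) ->
  h l (t %% n) <= dist (vtx l0 j) (vtx l (j + t)).
Proof.
move=> lt_l0 lt_l h0 h_lip h_le.
have -> : h l (t %% n) = h (val (vtx l (j + t)).1) (offset (idx j) (vtx l (j + t)).2).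
  by rewrite vtx_letter // vtx_index offset_idx.
apply: (lipschitz_le_dist (f := fun x : V n => h (val x.1) (offset (idx j) x.2))).
- by rewrite vtx_letter // vtx_index offset_self.
- by move=> x y /(Uadj_coord (idx j)); apply: h_lip; apply: offset_lt.
- by move=> y; rewrite card_prod !card_ord.
Qed.

Definition ring_letter (l : nat) := [|| l == 0, l == 1 | l == 4].

Lemma Uadj_ring l j : ring_letter l -> Uadj (vtx l j) (vtx l j.+1).
Proof.
move=> ring_l; have lt_l : l < 5 by case/or3P: ring_l => /eqP->.
have succ_j : succ_mod (idx j) (idx j.+1).
  by rewrite /succ_mod /= -[(j %% n).+1]addn1 modnDml -[j.+1]addn1.
by rewrite /Uadj /Uedge0 /= vtx_letter // succ_j; case/or3P: ring_l => /eqP->.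
Qed.

Lemma Uadj_spoke l j : l < 4 -> Uadj (vtx l j) (vtx l.+1 j).
Proof.
move=> lt_l; rewrite /Uadj /Uedge0 /= !vtx_letter ?eqxx //; last exact: ltnW.
by case: l lt_l => [|[|[|[|]]]].
Qed.

Lemma dist_ring l j t : ring_letter l -> dist (vtx l j) (vtx l (j + t)) <= t.
Proof.
move=> ring_l; elim: t => [|t IH]; first by rewrite addn0 dist_le_ball ?in_ball0.
apply: leq_trans (dist_triangle _ (vtx l (j + t)) _) _.
by rewrite -[t.+1]addn1 leq_add // addnA addn1 dist_adj // Uadj_ring.
Qed.

Lemma dist_spoke_addn l d j : l + d < 5 -> dist (vtx l j) (vtx (l + d) j) <= d.
Proof.
elim: d => [|d IH] lt_ld; first by rewrite addn0 dist_le_ball ?in_ball0.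
apply: leq_trans (dist_triangle _ (vtx (l + d) j) _) _.
rewrite addnS -[d.+1]addn1; apply: leq_add; first by apply: IH; lia.
by apply/dist_adj/Uadj_spoke; lia.
Qed.

Lemma dist_spoke l l' j :
  l < 5 -> l' < 5 -> dist (vtx l j) (vtx l' j) <= (l - l') + (l' - l).
Proof.
move=> lt_l lt_l'; case: (leqP l l') => [le_ll'|/ltnW le_l'l].
  have := @dist_spoke_addn l (l' - l) j; rewrite subnKC // => /(_ lt_l') le_d.
  by apply: leq_trans le_d _; rewrite leq_addl.
have := @dist_spoke_addn l' (l - l') j; rewrite subnKC // => /(_ lt_l) le_d.
by rewrite distC; apply: leq_trans le_d _; rewrite leq_addr.
Qed.

Definition ring_walk j j' t := j + t = j' \/ j + t = j' + n \/ j + t + n = j'.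

Lemma dist_ring_walk l j j' t :
  ring_letter l -> ring_walk j j' t -> dist (vtx l j) (vtx l j') <= t.
Proof.
move=> ring_l [<-|[jt|<-]]; rewrite ?vtxDn ?dist_ring //.
by rewrite -(vtxDn l j') -jt dist_ring.
Qed.

Lemma dist_via_ring r l l' j j' t : ring_letter r -> l < 5 -> l' < 5 ->
  ring_walk j j' t \/ ring_walk j' j t ->
  dist (vtx l j) (vtx l' j') <= (l - r) + (r - l) + t + ((r - l') + (l' - r)).
Proof.
move=> ring_r lt_l lt_l' walk; have lt_r : r < 5 by case/or3P: ring_r => /eqP->.
apply: leq_trans (dist_triangle _ (vtx r j') _) _; apply: leq_add; last exact: dist_spoke.
apply: leq_trans (dist_triangle _ (vtx r j) _) _; apply: leq_add; first exact: dist_spoke.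
by case: walk => [|walk]; [|rewrite distC]; apply: dist_ring_walk.
Qed.

Lemma Uadj_vtx l j (x : V n) : l < 5 -> Uadj (vtx l j) x ->
  exists l' r, [/\ r < n, coord_adj l l' 0 r & x = vtx l' (j + r)].
Proof.
move=> lt_l /(Uadj_coord (idx j)); rewrite vtx_letter // vtx_index offset_self => adj.
by exists (val x.1), (offset (idx j) x.2); rewrite offset_lt -vtx_offset.
Qed.

Lemma Uadj_a j x : Uadj (vtx 0 j) x ->
  [\/ x = vtx 0 (j + 1), x = vtx 0 (j + (n - 1)) | x = vtx 1 j].
Proof.
case/Uadj_vtx => // l [r] [lt_rn adj ->].
have : l = 0 /\ (r = 1 \/ r = n - 1) \/ l = 1 /\ r = 0.
  by move: adj; rewrite /coord_adj /cyc_succ; lia.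
by case=> [[-> [->|->]]|[-> ->]]; rewrite ?addn0; [constructor 1|constructor 2|constructor 3].
Qed.

Lemma Uadj_e j x : Uadj (vtx 4 j) x ->
  [\/ x = vtx 4 (j + 1), x = vtx 4 (j + (n - 1)) | x = vtx 3 j].
Proof.
case/Uadj_vtx => // l [r] [lt_rn adj ->].
have : l = 4 /\ (r = 1 \/ r = n - 1) \/ l = 3 /\ r = 0.
  by move: adj; rewrite /coord_adj /cyc_succ; lia.
by case=> [[-> [->|->]]|[-> ->]]; rewrite ?addn0; [constructor 1|constructor 2|constructor 3].
Qed.

Lemma Uadj_c j x : Uadj (vtx 2 j) x ->
  [\/ x = vtx 1 j, x = vtx 3 j | x = vtx 3 (j + (n - 1))].
Proof.
case/Uadj_vtx => // l [r] [lt_rn adj ->].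
have : l = 1 /\ r = 0 \/ l = 3 /\ (r = 0 \/ r = n - 1).
  by move: adj; rewrite /coord_adj /cyc_succ; lia.
by case=> [[-> ->]|[-> [->|->]]]; rewrite ?addn0; [constructor 1|constructor 2|constructor 3].
Qed.

Lemma Uadj_d j x : Uadj (vtx 3 j) x ->
  [\/ x = vtx 2 j, x = vtx 4 j | x = vtx 2 (j + 1)].
Proof.
case/Uadj_vtx => // l [r] [lt_rn adj ->].
have : l = 2 /\ (r = 0 \/ r = 1) \/ l = 4 /\ r = 0.
  by move: adj; rewrite /coord_adj /cyc_succ; lia.
by case=> [[-> [->|->]]|[-> ->]]; rewrite ?addn0; [constructor 1|constructor 3|constructor 2].
Qed.

Lemma vtx_inj l l' j j' : l < 5 -> l' < 5 -> vtx l j = vtx l' j' -> l = l' /\ idx j = idx j'.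
Proof.
move=> lt_l lt_l' [eq_l eq_j]; split; last exact: val_inj.
by rewrite -(inordK lt_l) -(inordK lt_l') eq_l.
Qed.

Lemma idx_addn_inj s : injective (fun i : 'I_n => idx (i + s)).
Proof.
by move=> i i' /(congr1 val) /= /eqP; rewrite eqn_modDr !modn_small // => /eqP/val_inj.
Qed.

End Coordinates.

Lemma odd_gt0 k : 0 < 2 * k + 1.
Proof. by rewrite addn1. Qed.

Section Antipodes.
Variable k : nat.
Hypothesis k_gt0 : 0 < k.
Local Notation n := (2 * k + 1).
Local Notation n_gt0 := (odd_gt0 k).
Local Notation vtx := (vtx n_gt0).
Local Notation pot_a := (pot_a n).
Local Notation pot_c := (pot_c n).

Lemma dist_a_e j : k + 4 <= dist (vtx 0 j) (vtx 4 (j + k)).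
Proof.
have := potential_le_dist (h := pot_a) n_gt0 j k (isT : 0 < 5) (isT : 4 < 5) (@pot_a_base n)
  (pot_a_lipschitz n_gt0) (pot_a_le n_gt0).
by rewrite modn_small /pot_a /cdist'; lia.
Qed.

Lemma dist_c_d j : k + 2 <= dist (vtx 2 j) (vtx 3 (j + k)).
Proof.
have := potential_le_dist (h := pot_c) n_gt0 j k (isT : 2 < 5) (isT : 3 < 5) (@pot_c_base n)
  (pot_c_lipschitz n_gt0) (pot_c_le n_gt0).
by rewrite modn_small /pot_c /cdist'; lia.
Qed.

(* [via_ring r t]: go along the spoke to ring [r], [t] steps around it, back along a spoke. *)
Ltac via_ring r t :=
  apply: leq_trans (dist_via_ring n_gt0 (r := r) (t := t) _ _ _ _) _ => //;
  rewrite /ring_walk; lia.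

Lemma a_maximally_distant_from_e j : maximally_distant (vtx 4 (j + k)) (vtx 0 j).
Proof.
move=> x /Uadj_a [] ->; rewrite [leqRHS]distC; apply: leq_trans _ (dist_a_e j).
- by via_ring 0 (k - 1).
- by via_ring 0 k.
- by via_ring 1 k.
Qed.

Lemma e_maximally_distant_from_a j : maximally_distant (vtx 0 j) (vtx 4 (j + k)).
Proof.
move=> x /Uadj_e [] ->; apply: leq_trans _ (dist_a_e j).
- by via_ring 0 k.
- by via_ring 0 (k - 1).
- by via_ring 0 k.
Qed.

Lemma c_maximally_distant_from_d j : maximally_distant (vtx 3 (j + k)) (vtx 2 j).
Proof.
move=> x /Uadj_c [] ->; rewrite [leqRHS]distC; apply: leq_trans _ (dist_c_d j).
- by via_ring 1 k.
- by via_ring 4 k.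
- by via_ring 4 k.
Qed.

Lemma d_maximally_distant_from_c j : maximally_distant (vtx 2 j) (vtx 3 (j + k)).
Proof.
move=> x /Uadj_d [] ->; apply: leq_trans _ (dist_c_d j).
- by via_ring 1 k.
- by via_ring 4 k.
- by via_ring 1 k.
Qed.

(* The pair number [(b, i)] is (a_i, e_(i+k)) if [b], else (c_i, d_(i+k)). *)
Definition mmd_pair (q : bool * 'I_n) (side : bool) : V n :=
  let: (b, i) := q in
  vtx (if b then (if side then 0 else 4) else (if side then 2 else 3))
      (i + (if side then 0 else k)).

Lemma mmd_pair_inj : injective (fun qs => mmd_pair qs.1 qs.2).
Proof.
have lt_letter (b s : bool) : (if b then (if s then 0 else 4) else (if s then 2 else 3)) < 5.
  by case: b s => [] [].
move=> [[b i] s] [[b' i'] s'] /=; rewrite /mmd_pair.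
case/vtx_inj => [||eq_l]; rewrite ?lt_letter //.
have [<- <-] : b = b' /\ s = s' by move: eq_l; case: b b' s s' => [] [] [] [].
by move/idx_addn_inj => ->.
Qed.

Lemma mmd_pair_neq q : mmd_pair q true <> mmd_pair q false.
Proof. by case: q => [[] i] /vtx_inj => /(_ isT isT) []. Qed.

Lemma mmd_pair_resolvers q w : strongly_resolves w (mmd_pair q true) (mmd_pair q false) ->
  w = mmd_pair q true \/ w = mmd_pair q false.
Proof.
apply: strongly_resolves_mutually_maximally_distant; first exact: mmd_pair_neq.
all: case: q => [[] i]; rewrite /mmd_pair addn0.
- exact: a_maximally_distant_from_e.
- exact: c_maximally_distant_from_d.
- exact: e_maximally_distant_from_a.
- exact: d_maximally_distant_from_c.
Qed.

End Antipodes.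

Lemma card_le_hitting_pairs (I T : finType) (p : I -> bool -> T) (S : {set T}) :
  injective (fun ib => p ib.1 ib.2) -> (forall i, exists b, p i b \in S) -> #|I| <= #|S|.
Proof.
move=> p_inj hit; pose side i := p i true \in S.
have p_side_in i : p i (side i) \in S.
  rewrite /side; case: (boolP (p i true \in S)) => // /negPf p_true_notin.
  by case: (hit i) => -[] // p_true_in; rewrite p_true_in in p_true_notin.
have inj : injective (fun i => p i (side i)).
  by move=> i i' eq_p; case: (p_inj (i, side i) (i', side i') eq_p).
rewrite -(card_imset _ inj); apply/subset_leq_card/subsetP => _ /imsetP [i _ ->].
exact: p_side_in.
Qed.

Theorem lemma4p5 (k : nat) (S : {set V (2 * k + 1)}) :
  1 <= k -> strong_resolving_set S -> 2 * (2 * k + 1) <= #|S|.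
Proof.
move=> k_gt0 resolving.
have hit (q : bool * 'I_(2 * k + 1)) : exists side, mmd_pair q side \in S.
  have [w wS] := resolving _ _ (@mmd_pair_neq k q).
  by case/(mmd_pair_resolvers k_gt0) => eq_w; [exists true | exists false]; rewrite -eq_w.
have := card_le_hitting_pairs (@mmd_pair_inj k) hit.
by rewrite card_prod card_bool card_ord.
Qed.
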